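(* Let $G=(V,E)$ be an $S$-regular graph with cells $V_1,\dots,V_k$, $n_i=|V_i|$, and let $C\subsetneq V$. Put $c_i=|C\cap V_i|/n_i$. Let $A_{\bar C}$ be the adjacency matrix of the subgraph of $G$ induced by $V\setminus C$. Then the maximum eigenvalue of $A_{\bar C}$ is at most \[\lambda_S\Bigl(1-\min_{1\le i\le k}c_i\Bigr)+\lambda_B\Bigl(\min_{1\le i\le k}c_i\Bigr).\]
   Context: All graphs are simple, undirected and connected. $G$ is $S$-regular ($S=(s_{ij})$ a $k\times k$ nonnegative integer matrix) if $V$ is partitioned into nonempty cells $V_1,\dots,V_k$ such that every vertex of $V_i$ has exactly $s_{ij}$ neighbours in $V_j$. Let $A$ be the adjacency matrix of $G$, $|V|=n>k$. The matrix $S$ is diagonalizable with real eigenvalues $\lambda_{S_1},\dots,\lambda_{S_k}$ (with multiplicity); the subspace $W=\mathrm{span}\{\mathbf{1}_{V_1},\dots,\mathbf{1}_{V_k}\}$ is $A$-invariant and the eigenvalues of $A$ on $W$ are exactly $\lambda_{S_1},\dots,\lambda_{S_k}$ (the $S$-eigenvalues). The remaining $n-k$ eigenvalues of $A$ (those of $A$ restricted to $W^\perp$) are the bulk eigenvalues. $\lambda_S$ is the largest eigenvalue of $S$ and $\lambda_B$ is the largest absolute value of a bulk eigenvalue. *)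

From HB Require Import structures.
From mathcomp Require Import all_boot all_order all_algebra.
From mathcomp Require Import reals.
Set Implicit Arguments. Unset Strict Implicit. Unset Printing Implicit Defensive.
Import Order.TTheory GRing.Theory Num.Theory.
Local Open Scope ring_scope.

Definition simple_graph (V : finType) (e : rel V) : Prop :=
  irreflexive e /\ symmetric e.
Definition connected_graph (V : finType) (e : rel V) : Prop :=
  forall x y : V, connect e x y.

(* S-regularity: the partition is given by cell : V -> 'I_k (cells V_i =
   cell^-1 i), all cells nonempty, and every vertex of V_i has exactly
   S i j neighbours in V_j. *)
Definition S_regular (V : finType) (e : rel V) (k : nat)
    (cell : V -> 'I_k) (S : 'M[nat]_k) : Prop :=
  (forall i : 'I_k, exists x : V, cell x = i) /\
  (forall (x : V) (j : 'I_k), #|[set y | e x y & cell y == j]| = S (cell x) j).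

Definition adj_on (R : realType) (V : finType) (e : rel V) (D : {set V}) :
    'M[R]_#|D| :=
  \matrix_(i, j) (e (@enum_val V (mem D) i) (@enum_val V (mem D) j))%:R.

Definition adjmx (R : realType) (V : finType) (e : rel V) : 'M[R]_#|[set: V]| :=
  adj_on R e [set: V].

Definition cell_ind (R : realType) (V : finType) (k : nat) (cell : V -> 'I_k)
    (j : 'I_k) : 'rV[R]_#|[set: V]| :=
  \row_i (cell (@enum_val V (mem [set: V]) i) == j)%:R.

(* Bulk eigenvalue: eigenvalue of A restricted to W^perp, i.e. with an
   eigenvector orthogonal to all cell indicator vectors. *)
Definition bulk_eigenvalue (R : realType) (V : finType) (e : rel V) (k : nat)
    (cell : V -> 'I_k) (mu : R) : Prop :=
  exists v : 'rV[R]_#|[set: V]|,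
    [/\ v != 0, v *m adjmx R e = mu *: v &
        forall j : 'I_k, v *m (cell_ind R cell j)^T = 0].

Definition largest_eigenvalue (R : realType) (k : nat) (M : 'M[R]_k) (l : R) : Prop :=
  eigenvalue M l /\ forall m : R, eigenvalue M m -> m <= l.

Definition largest_abs_bulk (R : realType) (V : finType) (e : rel V) (k : nat)
    (cell : V -> 'I_k) (l : R) : Prop :=
  (exists mu, bulk_eigenvalue e cell mu /\ `|mu| = l) /\
  forall mu, bulk_eigenvalue e cell mu -> `|mu| <= l.

Definition cfrac (R : realType) (V : finType) (k : nat) (cell : V -> 'I_k)
    (C : {set V}) (i : 'I_k) : R :=
  (#|C :&: [set x | cell x == i]|)%:R / (#|[set x | cell x == i]|)%:R.

(* min over i of c_i (k >= 1 whenever V is nonempty; all c_i <= 1). *)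
Definition cmin (R : realType) (V : finType) (k : nat) (cell : V -> 'I_k)
    (C : {set V}) : R :=
  \big[Num.min/1]_(i < k) cfrac R cell C i.

(* Extend an eigenvector of the induced subgraph by zero to a vector x on V, so
   that x A x^T = mu |x|^2.  Let W be the span of the cell indicators and split
   x = w + u with w in W (the cellwise average of x) and u orthogonal to W.
   Both W and its complement are A-invariant, so x A x^T = w A w^T + u A u^T,
   and the Rayleigh principle on each of them bounds this by
   lamS |w|^2 + lamB |u|^2: the eigenvalues of A on W are eigenvalues of S, those
   on its complement are bulk eigenvalues.  As x vanishes on C, Cauchy-Schwarz on
   each cell gives |w|^2 <= (1 - min c_i) |x|^2.  Finally lamB <= lamS, since a
   Perron eigenvector of A is nonnegative, hence has a nonzero projection on W. *)

From HB Require Import structures.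
From mathcomp Require Import all_boot all_order all_algebra.
From mathcomp Require Import reals boolp classical_sets topology normedtype derive.
From mathcomp Require Import ring lra.
Import Order.TTheory GRing.Theory Num.Theory.
Import numFieldNormedType.Exports.
Set Implicit Arguments. Unset Strict Implicit. Unset Printing Implicit Defensive.
Local Open Scope ring_scope.

Lemma le0_of_affine_le0 (R : realFieldType) (a b : R) :
  (forall t, 0 < t -> a + t * b <= 0) -> a <= 0.
Proof.
move=> affine_le0; rewrite leNgt; apply/negP => a_gt0.
have nb_gt0 : 0 < `|b| + 1 by rewrite ltr_wpDl.
pose t := a / (`|b| + 1).
have t_gt0 : 0 < t by rewrite divr_gt0.
have ta : t * (`|b| + 1) = a by rewrite divfK ?gt_eqF.
rewrite mulrDr mulr1 in ta.
have tb : - (t * `|b|) <= t * b by rewrite -mulrN ler_pM2l // lerNl -normrN ler_norm.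
have := affine_le0 t t_gt0; lra.
Qed.

Lemma sqr_sum_le_card (R : realFieldType) (T : finType) (P : pred T) (F : T -> R) :
  (\sum_(i | P i) F i) ^+ 2 <= #|P|%:R * \sum_(i | P i) F i ^+ 2.
Proof.
set s1 := \sum_(i | P i) F i; set s2 := \sum_(i | P i) F i ^+ 2.
have -> : #|P|%:R = \sum_(i | P i) (1 : R) by rewrite -sum1_card natr_sum.
set N := \sum_(i | P i) (1 : R).
have inner i : \sum_(j | P j) (F i - F j) ^+ 2 = F i ^+ 2 * N + s2 - 2 * F i * s1.
  rewrite /N /s2 /s1 !mulr_sumr -big_split -sumrB.
  by apply: eq_bigr => j _ /=; ring.
have outer : \sum_(i | P i) \sum_(j | P j) (F i - F j) ^+ 2 = 2 * (N * s2 - s1 ^+ 2).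
  under eq_bigr do rewrite inner.
  rewrite sumrB big_split /= -!mulr_suml -mulr_sumr -/s1 -/s2.
  have -> : \sum_(i | P i) s2 = N * s2.
    by rewrite /N mulr_suml; apply: eq_bigr => i _; rewrite mul1r.
  ring.
have : 0 <= 2 * (N * s2 - s1 ^+ 2).
  by rewrite -outer; apply: sumr_ge0 => i _; apply: sumr_ge0 => j _; exact: sqr_ge0.
by rewrite pmulr_rge0 // subr_ge0.
Qed.

Lemma eigenvalue_trmx (F : fieldType) n (M : 'M[F]_n) a :
  eigenvalue M^T a = eigenvalue M a.
Proof.
rewrite !eigenvalue_root_char /char_poly -[\det (char_poly_mx M)]det_tr.
by rewrite /char_poly_mx linearB /= tr_scalar_mx map_trmx.
Qed.

(* [projmx P N] is the orthogonal projection onto the column space of [P] when [N]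
   inverts the Gram matrix [P^T P]; [A *m P = P *m M] says that space is [A]-stable. *)
Definition projmx (F : ringType) n k (P : 'M[F]_(n, k)) (N : 'M[F]_k) : 'M[F]_n :=
  P *m N *m P^T.

Section OrthogonalProjection.
Variables (F : fieldType) (n k : nat) (A : 'M[F]_n) (P : 'M[F]_(n, k)) (M N : 'M[F]_k).
Hypotheses (A_sym : A^T = A) (AP : A *m P = P *m M).
Hypotheses (N_sym : N^T = N) (N_gram : N *m (P^T *m P) = 1%:M).
Local Notation Q := (projmx P N).

Lemma projmx_sym : Q^T = Q.
Proof. by rewrite /projmx !trmx_mul trmxK N_sym mulmxA. Qed.

Lemma projmx_fix_cols : Q *m P = P.
Proof. by rewrite /projmx -!mulmxA N_gram mulmx1. Qed.

Lemma projmx_idem : Q *m Q = Q.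
Proof. by rewrite {2}/projmx !mulmxA projmx_fix_cols. Qed.

Lemma projmx_comm : A *m Q = Q *m A.
Proof.
have QAQ : Q *m A *m Q = A *m Q.
  by rewrite /projmx !mulmxA -(mulmxA _ A) AP mulmxA projmx_fix_cols -AP.
have tAQ : (A *m Q)^T = Q *m A by rewrite trmx_mul projmx_sym A_sym.
have tQAQ : (Q *m A *m Q)^T = Q *m A *m Q.
  by rewrite trmx_mul projmx_sym trmx_mul projmx_sym A_sym mulmxA.
by rewrite -QAQ -[RHS]tAQ -QAQ tQAQ.
Qed.

Lemma lker_stable (u : 'rV[F]_n) : u *m P = 0 -> u *m A *m P = 0.
Proof. by move=> uP; rewrite -mulmxA AP mulmxA uP mul0mx. Qed.

Lemma projmx_fixedE (u : 'rV[F]_n) : (u *m (1%:M - Q) == 0) = (u *m Q == u).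
Proof. by rewrite mulmxBr mulmx1 subr_eq0 eq_sym. Qed.

Lemma projmx_range_stable (u : 'rV[F]_n) :
  u *m (1%:M - Q) = 0 -> u *m A *m (1%:M - Q) = 0.
Proof.
move=> /eqP; rewrite projmx_fixedE => /eqP uQ; apply/eqP.
by rewrite projmx_fixedE -mulmxA projmx_comm mulmxA uQ.
Qed.

Lemma projmx_range_eigenvalue (u : 'rV[F]_n) a :
  u *m Q = u -> u != 0 -> u *m A = a *: u -> eigenvalue M a.
Proof.
move=> uQ u_neq0 uA; rewrite -eigenvalue_trmx.
pose g := u *m P *m N.
have ugP : u = g *m P^T by rewrite -{1}uQ /projmx !mulmxA.
have PtA : P^T *m A = M^T *m P^T by rewrite -{1}A_sym -trmx_mul AP trmx_mul.
have gram_N : P^T *m P *m N = 1%:M by apply: mulmx1C.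
apply/eigenvalueP; exists g; last by apply: contraNneq u_neq0 => g0; rewrite ugP g0 mul0mx.
have : (g *m M^T - a *: g) *m P^T = 0.
  by rewrite mulmxBl -mulmxA -PtA mulmxA -ugP uA -scalemxAl -ugP subrr.
move/(congr1 (mulmx^~ (P *m N))).
by rewrite mul0mx -mulmxA (mulmxA P^T) gram_N mulmx1 => /eqP; rewrite subr_eq0 => /eqP.
Qed.

End OrthogonalProjection.

Definition qform (R : pzRingType) n (A : 'M[R]_n) (u : 'rV[R]_n) : R :=
  (u *m A *m u^T) 0 0.
Definition sqnorm (R : pzRingType) n (u : 'rV[R]_n) : R := qform 1%:M u.

Section QuadraticForm.
Variables (R : realFieldType) (n : nat).
Implicit Types (A : 'M[R]_n) (u v : 'rV[R]_n).

Lemma qformE A u : qform A u = \sum_j (u *m A) 0 j * u 0 j.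
Proof. by rewrite /qform mxE; apply: eq_bigr => j _; rewrite [u^T j 0]mxE. Qed.

Lemma sqnormE u : sqnorm u = \sum_i u 0 i ^+ 2.
Proof. by rewrite /sqnorm qformE mulmx1; apply: eq_bigr => i _; rewrite expr2. Qed.

Lemma sqnorm_ge0 u : 0 <= sqnorm u.
Proof. by rewrite sqnormE; apply: sumr_ge0 => i _; apply: sqr_ge0. Qed.

Lemma sqnorm_eq0 u : (sqnorm u == 0) = (u == 0).
Proof.
rewrite sqnormE psumr_eq0 => [|i _]; last exact: sqr_ge0.
apply/allP/eqP => [u0|-> i _]; last by rewrite implyTb mxE expr0n.
apply/rowP => i; rewrite mxE; apply/eqP; rewrite -sqrf_eq0.
exact: u0 i (mem_index_enum i).
Qed.

Lemma sqnorm_gt0 u : (0 < sqnorm u) = (u != 0).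
Proof. by rewrite lt_def sqnorm_eq0 sqnorm_ge0 andbT. Qed.

Lemma qform0 A : qform A 0 = 0.
Proof. by rewrite /qform !mul0mx mxE. Qed.

Lemma qformZ A c u : qform A (c *: u) = c ^+ 2 * qform A u.
Proof. by rewrite /qform linearZ /= -!scalemxAl -scalemxAr !mxE mulrA expr2. Qed.

Lemma qform_eigen A u a : u *m A = a *: u -> qform A u = a * sqnorm u.
Proof. by move=> uA; rewrite /sqnorm /qform uA mulmx1 -scalemxAl mxE. Qed.

Lemma qformD A u v : A^T = A ->
  qform A (u + v) = qform A u + 2 * (u *m A *m v^T) 0 0 + qform A v.
Proof.
move=> A_sym; rewrite /qform linearD /= !mulmxDl !mulmxDr.
have -> : v *m A *m u^T = (u *m A *m v^T)^T by rewrite !trmx_mul trmxK A_sym mulmxA.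
set a := u *m A *m u^T; set b := u *m A *m v^T; set d := v *m A *m v^T.
rewrite !mxE; ring.
Qed.

Lemma qform_projD A (Q : 'M[R]_n) u :
  A^T = A -> Q^T = Q -> Q *m Q = Q -> A *m Q = Q *m A ->
  qform A u = qform A (u *m Q) + qform A (u - u *m Q).
Proof.
move=> A_sym Q_sym QQ AQ; rewrite -[in LHS](subrKC (u *m Q) u) [in LHS]qformD //.
suff -> : (u *m Q *m A *m (u - u *m Q)^T) = 0 by rewrite mxE mulr0 addr0.
rewrite linearB /= trmx_mul Q_sym mulmxBr (mulmxA (u *m Q *m A)) -(mulmxA (u *m Q) A) AQ.
by rewrite (mulmxA (u *m Q)) -(mulmxA u Q Q) QQ subrr.
Qed.

Lemma qform_mulmx m A (E : 'M[R]_(m, n)) (x : 'rV[R]_m) :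
  qform A (x *m E) = qform (E *m A *m E^T) x.
Proof. by rewrite /qform trmx_mul !mulmxA. Qed.

Lemma sqnormZ c u : sqnorm (c *: u) = c ^+ 2 * sqnorm u.
Proof. exact: qformZ. Qed.

Lemma sqnorm_map_normr u : sqnorm (map_mx (fun x => `|x|) u) = sqnorm u.
Proof. by rewrite !sqnormE; apply: eq_bigr => i _; rewrite mxE real_normK ?num_real. Qed.

Lemma qform_map_normr A u : (forall i j, 0 <= A i j) ->
  `|qform A u| <= qform A (map_mx (fun x => `|x|) u).
Proof.
move=> A_ge0; rewrite !qformE; apply: le_trans (ler_norm_sum _ _ _) _.
apply: ler_sum => j _; rewrite normrM [map_mx _ _ _ j]mxE ler_wpM2r //.
rewrite !mxE; apply: le_trans (ler_norm_sum _ _ _) _; apply: ler_sum => i _.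
by rewrite normrM (ger0_norm (A_ge0 i j)) mxE.
Qed.

End QuadraticForm.

(* A subspace is given as the left kernel [u *m P = 0] of a matrix [P]. *)
Section Rayleigh.
Variables (R : realType) (n : nat).
Implicit Types (A : 'M[R]_n) (u v : 'rV[R]_n).

Lemma sqnorm_normalize (u : 'rV[R]_n) : u != 0 ->
  sqnorm ((Num.sqrt (sqnorm u))^-1 *: u) = 1.
Proof.
by rewrite -sqnorm_gt0 => u_gt0; rewrite sqnormZ exprVn sqr_sqrtr ?mulVf ?gt_eqF // ltW.
Qed.

Lemma continuous_mulmx_entry m (P : 'M[R]_(n, m)) j :
  continuous (fun u : 'rV[R]_n => (u *m P) 0 j).
Proof.
have -> : (fun u : 'rV[R]_n => (u *m P) 0 j) = fun u => \sum_i u 0 i * P i j.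
  by apply: funext => u; rewrite mxE.
apply: continuous_big => [|i _ u]; first exact: add_continuous.
by apply: continuousM; [exact: coord_continuous | exact: cst_continuous].
Qed.

Lemma continuous_qform A : continuous (qform A).
Proof.
have -> : qform A = fun u => \sum_j (u *m A) 0 j * u 0 j.
  by apply: funext => u; rewrite qformE.
apply: continuous_big => [|j _ u]; first exact: add_continuous.
by apply: continuousM; [exact: continuous_mulmx_entry | exact: coord_continuous].
Qed.

Lemma sqnorm1_entry_le1 u i : sqnorm u = 1 -> `|u 0 i| <= 1.
Proof.
move=> u1; rewrite -(expr_le1 (ltn0Sn 1)) // real_normK ?num_real // -u1 sqnormE.
rewrite (bigD1 i) //= lerDl; apply: sumr_ge0 => j _; exact: sqr_ge0.
Qed.

Lemma qform_sphere_max A m (P : 'M[R]_(n, m)) u0 : u0 *m P = 0 -> u0 != 0 ->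
  exists2 v, v *m P = 0 /\ sqnorm v = 1 &
    forall u, u *m P = 0 -> sqnorm u = 1 -> qform A u <= qform A v.
Proof.
move=> u0P u0_neq0.
pose K := [set u : 'rV[R]_n | u *m P = 0 /\ sqnorm u = 1]%classic.
have K_closed : closed K.
  have -> : K = (\bigcap_j ((fun u => (u *m P) 0 j) @^-1` [set 0]) `&`
                 (fun u : 'rV[R]_n => sqnorm u) @^-1` [set 1])%classic.
    apply/seteqP; split => u /= [uP u1]; split => //.
      by move=> j _ /=; rewrite uP mxE.
    by apply/rowP => j; rewrite [RHS]mxE; exact: (uP j I).
  have closed_level (g : 'rV[R]_n -> R) r : continuous g -> closed (g @^-1` [set r]).
    by move=> g_cont; exact: (proj1 (continuous_closedP _) g_cont _ (@closed_eq R r)).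
  apply: closedI; first apply: closed_bigI => j _; apply: closed_level.
    exact: continuous_mulmx_entry.
  exact: continuous_qform.
have K_compact : compact K.
  have box_compact :
      compact [set v : 'rV[R]_n | forall i, v ord0 i \in `[(-1 : R), 1]%R]%classic.
    apply: (@rV_compact _ _ (fun=> `[(-1 : R), 1]%classic)) => _.
    exact: segment_compact.
  apply: subclosed_compact K_closed box_compact _ => u [_ u1] i.
  by rewrite in_itv /= -ler_norml; exact: sqnorm1_entry_le1.
have K_neq0 : (K !=set0)%classic.
  exists ((Num.sqrt (sqnorm u0))^-1 *: u0); split; last exact: sqnorm_normalize.
  by rewrite -scalemxAl u0P scaler0.
have [v /set_mem [vP v1] v_max] :=
  compact_EVT_max K_neq0 K_compact (continuous_subspaceT (continuous_qform (A := A))).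
by exists v => // u uP u1; apply: v_max; exact/mem_set.
Qed.

Lemma rayleigh_maximizer_eigen A m (P : 'M[R]_(n, m)) l y :
  A^T = A -> (forall u, u *m P = 0 -> u *m A *m P = 0) ->
  (forall u, u *m P = 0 -> qform A u <= l * sqnorm u) ->
  y *m P = 0 -> qform A y = l * sqnorm y -> y *m A = l *: y.
Proof.
move=> A_sym P_stable le_l yP qy.
(* The bound at [y + t g] for small [t > 0] forces [2 |g|^2 <= 0]. *)
pose g := y *m A - l *: y.
have gP : g *m P = 0 by rewrite mulmxBl -scalemxAl P_stable // yP scaler0 subrr.
have cross : (y *m A *m g^T) 0 0 - l * (y *m 1%:M *m g^T) 0 0 = sqnorm g.
  rewrite /sqnorm /qform !mulmx1 {3}/g mulmxBl -scalemxAl.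
  by set a := y *m A *m g^T; set b := y *m g^T; rewrite !mxE.
have step t : 0 < t -> 2 * sqnorm g + t * (qform A g - l * sqnorm g) <= 0.
  move=> t_gt0; rewrite -(pmulr_rle0 _ t_gt0).
  have := le_l (y + t *: g); rewrite mulmxDl -scalemxAl yP gP scaler0 addr0.
  move=> /(_ erefl); rewrite {1}/sqnorm !(qformD y (t *: g)) ?trmx1 //.
  rewrite !qformZ qy -/(sqnorm y) -/(sqnorm g) [(t *: g)^T]linearZ -!scalemxAr.
  rewrite [(t *: (y *m A *m g^T)) 0 0]mxE [(t *: (y *m 1%:M *m g^T)) 0 0]mxE.
  by rewrite -cross; lra.
have : 2 * sqnorm g <= 0 by apply: le0_of_affine_le0 => t; exact: step.
rewrite pmulr_rle0 // => g_le0.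
by apply/eqP; rewrite -subr_eq0 -sqnorm_eq0 eq_le g_le0 sqnorm_ge0.
Qed.

Lemma rayleigh_eigenvector A m (P : 'M[R]_(n, m)) u0 :
  A^T = A -> (forall u, u *m P = 0 -> u *m A *m P = 0) -> u0 *m P = 0 -> u0 != 0 ->
  exists l, (exists2 v : 'rV[R]_n, v *m P = 0 /\ v != 0 & v *m A = l *: v) /\
            forall u, u *m P = 0 -> qform A u <= l * sqnorm u.
Proof.
move=> A_sym P_stable u0P u0_neq0.
have [v [vP v1] v_max] := qform_sphere_max A u0P u0_neq0.
have le_v u : u *m P = 0 -> qform A u <= qform A v * sqnorm u.
  move=> uP; have [->|u_neq0] := eqVneq u 0; first by rewrite /sqnorm !qform0 mulr0.
  have := v_max _ _ (sqnorm_normalize u_neq0).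
  rewrite -scalemxAl uP scaler0 qformZ exprVn sqr_sqrtr ?sqnorm_ge0 // => /(_ erefl).
  by rewrite mulrC ler_pdivrMr ?sqnorm_gt0.
exists (qform A v); split => //; exists v; first by rewrite -sqnorm_gt0 v1.
by apply: rayleigh_maximizer_eigen le_v vP _; rewrite ?v1 ?mulr1.
Qed.

Lemma qform_le_eigenvalue_bound A m (P : 'M[R]_(n, m)) L :
  A^T = A -> (forall u, u *m P = 0 -> u *m A *m P = 0) ->
  (forall l v, v *m P = 0 -> v != 0 -> v *m A = l *: v -> l <= L) ->
  forall u, u *m P = 0 -> qform A u <= L * sqnorm u.
Proof.
move=> A_sym P_stable le_L u uP.
have [->|u_neq0] := eqVneq u 0; first by rewrite /sqnorm !qform0 mulr0.
have [l [[v [vP v_neq0] vA] le_l]] := rayleigh_eigenvector A_sym P_stable uP u_neq0.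
exact: le_trans (le_l u uP) (ler_wpM2r (sqnorm_ge0 u) (le_L l v vP v_neq0 vA)).
Qed.

Lemma nonneg_sym_perron A u0 :
  A^T = A -> (forall i j, 0 <= A i j) -> u0 != 0 ->
  exists l, (exists2 y : 'rV[R]_n,
               y != 0 /\ (forall i, 0 <= y 0 i) & y *m A = l *: y) /\
            forall a v, v != 0 -> v *m A = a *: v -> `|a| <= l.
Proof.
move=> A_sym A_ge0 u0_neq0; pose O : 'M[R]_(n, 1) := 0.
have O_stable u : u *m O = 0 -> u *m A *m O = 0 by rewrite !mulmx0.
have [l [[z [_ z_neq0] zA] le_l]] :=
  rayleigh_eigenvector A_sym O_stable (mulmx0 _ _) u0_neq0.
have {}le_l u : qform A u <= l * sqnorm u by apply: le_l; rewrite mulmx0.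
have le_abs u : `|qform A u| <= l * sqnorm u.
  by rewrite -sqnorm_map_normr; exact: le_trans (qform_map_normr _ A_ge0) (le_l _).
exists l; split; last first.
  move=> a v v_neq0 vA; have := le_abs v.
  by rewrite (qform_eigen vA) normrM (ger0_norm (sqnorm_ge0 v)) ler_pM2r ?sqnorm_gt0.
(* Entrywise absolute values do not decrease the quadratic form, so [|z|] is
   again a maximizer, hence an eigenvector. *)
exists (map_mx (fun x => `|x|) z); first split.
- by rewrite -sqnorm_gt0 sqnorm_map_normr sqnorm_gt0.
- by move=> i; rewrite mxE normr_ge0.
apply: (rayleigh_maximizer_eigen A_sym O_stable (fun u _ => le_l u) (mulmx0 _ _)).
apply/eqP; rewrite eq_le le_l sqnorm_map_normr -(qform_eigen zA).
exact: le_trans (ler_norm _) (qform_map_normr _ A_ge0).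
Qed.

End Rayleigh.

Section EquitablePartition.
Variables (R : realType) (V : finType) (e : rel V) (k : nat).
Variables (cell : V -> 'I_k) (S : 'M[nat]_k).
Hypotheses (e_sym : symmetric e) (S_reg : S_regular e cell S).

Local Notation n := #|[set: V]|.
Local Notation ev := (@enum_val V (mem [set: V])).
Local Notation A := (adjmx R e).
Local Notation SR := (map_mx (fun m : nat => m%:R : R) S).

Lemma sum_enum_val (F : V -> R) : \sum_(i < n) F (ev i) = \sum_x F x.
Proof.
rewrite -(big_enum_val (A := mem [set: V])) /=.
by apply: eq_bigl => x; rewrite inE.
Qed.

Definition vec (f : V -> R) : 'rV[R]_n := \row_i f (ev i).

Lemma sqnorm_vec f : sqnorm (vec f) = \sum_x f x ^+ 2.
Proof.
by rewrite sqnormE -sum_enum_val; apply: eq_bigr => i _; rewrite mxE.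
Qed.

Lemma adjmxE i j : A i j = (e (ev i) (ev j))%:R.
Proof. by rewrite mxE. Qed.

Lemma adjmx_sym : A^T = A.
Proof. by apply/matrixP => i j; rewrite mxE !adjmxE e_sym. Qed.

Lemma adjmx_ge0 i j : 0 <= A i j.
Proof. by rewrite adjmxE ler0n. Qed.

Definition cellmx : 'M[R]_(n, k) := \matrix_(i, c) (cell (ev i) == c)%:R.

Definition cell_size (c : 'I_k) : nat := #|[set x | cell x == c]|.

Lemma cell_size_gt0 c : 0 < (cell_size c)%:R :> R.
Proof. by have [x <-] := S_reg.1 c; rewrite ltr0n; apply/card_gt0P; exists x; rewrite inE. Qed.

Lemma vec_cellmx f : vec f *m cellmx = \row_c \sum_(x | cell x == c) f x.
Proof.
apply/rowP => c; rewrite !mxE (big_mkcond (fun x => cell x == c)) -sum_enum_val /=.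
by apply: eq_bigr => i _; rewrite !mxE; case: eqP; rewrite ?mulr1 ?mulr0.
Qed.

Lemma adjmx_cellmx : A *m cellmx = cellmx *m SR.
Proof.
apply/matrixP => i c; rewrite !mxE [RHS](bigD1 (cell (ev i))) //= [X in _ + X]big1.
  rewrite !mxE eqxx mul1r addr0 -(S_reg.2 (ev i) c).
  rewrite -[#|[set y | _ & _]|]sum1_card natr_sum; under eq_bigr do rewrite adjmxE mxE.
  rewrite (sum_enum_val (fun y => (e (ev i) y)%:R * (cell y == c)%:R)) [RHS]big_mkcond.
  by apply: eq_bigr => y _; rewrite inE -natrM; case: (e (ev i) y); case: (cell y == c).
by move=> c' /negbTE; rewrite !mxE eq_sym => ->; rewrite mul0r.
Qed.

Lemma cellmx_gram : cellmx^T *m cellmx = diag_mx (\row_c (cell_size c)%:R).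
Proof.
apply/row_matrixP => c; rewrite row_mul.
have -> : row c cellmx^T = vec (fun x => (cell x == c)%:R) by apply/rowP => i; rewrite !mxE.
rewrite vec_cellmx; apply/rowP => c'; rewrite !mxE.
have [<-|c_neq] := eqVneq c c'; last first.
  by rewrite mulr0n big1 // => x /eqP ->; rewrite eq_sym (negbTE c_neq).
rewrite mulr1n /cell_size -sum1_card natr_sum.
by apply: eq_big => [x|x /eqP ->]; rewrite ?inE ?eqxx.
Qed.

Definition cell_weight : 'M[R]_k := diag_mx (\row_c (cell_size c)%:R^-1).

Lemma cell_weight_sym : cell_weight^T = cell_weight.
Proof. exact: tr_diag_mx. Qed.

Lemma cell_weight_gram : cell_weight *m (cellmx^T *m cellmx) = 1%:M.
Proof.
rewrite cellmx_gram mulmx_diag -diag_const_mx; congr diag_mx; apply/rowP => c.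
by rewrite !mxE mulVf // gt_eqF ?cell_size_gt0.
Qed.

Local Notation Q := (projmx cellmx cell_weight).

Definition cell_avg (f : V -> R) (c : 'I_k) : R :=
  (\sum_(x | cell x == c) f x) / (cell_size c)%:R.

Lemma sum_cell_const (a : R) c : \sum_(x | cell x == c) a = (cell_size c)%:R * a.
Proof.
rewrite sumr_const mulr_natl; congr (_ *+ _).
by apply: eq_card => x; rewrite inE.
Qed.

Lemma cell_avg_const (a : R) c : cell_avg (fun=> a) c = a.
Proof. by rewrite /cell_avg sum_cell_const mulrC mulKf // gt_eqF ?cell_size_gt0. Qed.

Lemma vec_cellproj f : vec f *m Q = vec (fun x => cell_avg f (cell x)).
Proof.
rewrite /projmx !mulmxA vec_cellmx mul_mx_diag; apply/rowP => i; rewrite !mxE.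
rewrite (bigD1 (cell (ev i))) //= big1 => [|c /negbTE c_neq]; rewrite !mxE.
  by rewrite eqxx mulr1 addr0.
by rewrite eq_sym c_neq mulr0.
Qed.

Let Q_sym : Q^T = Q := projmx_sym cellmx cell_weight_sym.
Let Q_idem : Q *m Q = Q := projmx_idem cell_weight_gram.
Let AQ : A *m Q = Q *m A :=
  projmx_comm adjmx_sym adjmx_cellmx cell_weight_sym cell_weight_gram.

Lemma bulk_eigenvalue_cellmx (v : 'rV[R]_n) mu :
  v *m cellmx = 0 -> v != 0 -> v *m A = mu *: v -> bulk_eigenvalue e cell mu.
Proof.
move=> vP v_neq0 vA; exists v; split => // j.
have -> : (cell_ind R cell j)^T = col j cellmx by apply/colP => i; rewrite !mxE.
by rewrite colE mulmxA vP mul0mx.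
Qed.

Lemma qform_le_bulk lamB : largest_abs_bulk e cell lamB ->
  forall u, u *m cellmx = 0 -> qform A u <= lamB * sqnorm u.
Proof.
move=> [_ lamB_max]; apply: qform_le_eigenvalue_bound adjmx_sym _ _.
  exact: lker_stable adjmx_cellmx.
move=> l v vP v_neq0 vA.
exact: le_trans (ler_norm l) (lamB_max l (bulk_eigenvalue_cellmx vP v_neq0 vA)).
Qed.

Lemma qform_le_quotient lamS : largest_eigenvalue SR lamS ->
  forall w, w *m Q = w -> qform A w <= lamS * sqnorm w.
Proof.
move=> [_ lamS_max] w /eqP; rewrite -projmx_fixedE => /eqP wW.
apply: (qform_le_eigenvalue_bound adjmx_sym _ _ wW) => [u uW|l v].
  exact: (projmx_range_stable adjmx_sym adjmx_cellmx cell_weight_sym cell_weight_gram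
            uW).
move=> /eqP; rewrite projmx_fixedE => /eqP vQ v_neq0 vA; apply: lamS_max.
exact (projmx_range_eigenvalue adjmx_sym adjmx_cellmx cell_weight_gram vQ v_neq0 vA).
Qed.

Lemma cellproj_nonneg_neq0 (y : 'rV[R]_n) :
  y != 0 -> (forall i, 0 <= y 0 i) -> y *m Q != 0.
Proof.
move=> y_neq0 y_ge0; apply: contraNneq y_neq0 => yQ0.
pose one := vec (fun=> 1).
have Q_one : Q *m one^T = one^T.
  rewrite -{1}Q_sym -trmx_mul vec_cellproj; congr (_^T); apply/rowP => i.
  by rewrite !mxE cell_avg_const.
have : (y *m one^T) 0 0 = 0 by rewrite -Q_one mulmxA yQ0 mul0mx mxE.
move/eqP; rewrite mxE psumr_eq0 => [/allP y0|i _]; last by rewrite !mxE mulr1.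
apply/eqP/rowP => i; apply/eqP; have := y0 i (mem_index_enum i).
by rewrite !mxE mulr1.
Qed.

Lemma abs_bulk_le_quotient lamS lamB : largest_eigenvalue SR lamS ->
  largest_abs_bulk e cell lamB -> lamB <= lamS.
Proof.
move=> [_ lamS_max] [[mu [[v [v_neq0 vA _]] <-]] _].
have [l [[y [y_neq0 y_ge0] yA] le_l]] := nonneg_sym_perron adjmx_sym adjmx_ge0 v_neq0.
apply: le_trans (le_l _ _ v_neq0 vA) (lamS_max _ _).
apply: (projmx_range_eigenvalue (u := y *m Q) adjmx_sym adjmx_cellmx cell_weight_gram).
- by rewrite -mulmxA Q_idem.
- exact: cellproj_nonneg_neq0.
- by rewrite -mulmxA -AQ mulmxA yA -scalemxAl.
Qed.

Section AverageOutsideC.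
Variables (C : {set V}) (f : V -> R) (c : 'I_k).
Hypothesis f_C : forall x, x \in C -> f x = 0.

Let D := [pred x | (cell x == c) && (x \notin C)].

Let sum_cell_D (F : V -> R) : (forall x, x \in C -> F x = 0) ->
  \sum_(x | cell x == c) F x = \sum_(x in D) F x.
Proof.
by move=> F_C; rewrite (bigID (fun x => x \in C)) /= big1 ?add0r => [|x /andP[_ /F_C]].
Qed.

Let card_D : (#|D| + #|C :&: [set x | cell x == c]|)%N = cell_size c.
Proof.
rewrite /cell_size -(cardsID C [set x | cell x == c]) addnC finset.setIC.
congr (_ + _)%N.
by apply: eq_card => x; rewrite !inE andbC.
Qed.

(* Cauchy-Schwarz on [D], the part of the cell outside [C], of size [(1 - c_i) n_i]. *)
Lemma cell_avg_sqr_le : (cell_size c)%:R * cell_avg f c ^+ 2 <=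
  (1 - cfrac R cell C c) * \sum_(x | cell x == c) f x ^+ 2.
Proof.
have N_gt0 := cell_size_gt0 c.
have one_sub : 1 - cfrac R cell C c = #|D|%:R / (cell_size c)%:R.
  move: (gt_eqF N_gt0); rewrite /cfrac -/(cell_size c) -card_D natrD => N_neq0.
  by field; rewrite N_neq0.
rewrite /cell_avg one_sub sum_cell_D // sum_cell_D => [|x /f_C ->]; last by rewrite expr0n.
have -> : (cell_size c)%:R * ((\sum_(x in D) f x) / (cell_size c)%:R) ^+ 2 =
          (\sum_(x in D) f x) ^+ 2 / (cell_size c)%:R by field; rewrite gt_eqF.
by rewrite [leRHS]mulrAC ler_pM2r ?invr_gt0 //; exact: sqr_sum_le_card.
Qed.

End AverageOutsideC.

Lemma cmin_le_cfrac (C : {set V}) c : cmin R cell C <= cfrac R cell C c.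
Proof. by rewrite /cmin (bigD1 c) //= ge_min lexx. Qed.

Lemma sqnorm_cellproj_le (C : {set V}) f : (forall x, x \in C -> f x = 0) ->
  sqnorm (vec f *m Q) <= (1 - cmin R cell C) * sqnorm (vec f).
Proof.
move=> f_C; rewrite vec_cellproj !sqnorm_vec !(partition_big cell predT) //= mulr_sumr.
apply: ler_sum => c _.
rewrite (eq_bigr (fun=> cell_avg f c ^+ 2)) => [|x /eqP -> //]; rewrite sum_cell_const.
apply: le_trans (cell_avg_sqr_le c f_C) _; apply: ler_wpM2r.
  by apply: sumr_ge0 => x _; exact: sqr_ge0.
by rewrite lerB // cmin_le_cfrac.
Qed.

Lemma sum_pred1_mulr (a : V) (F : V -> R) : \sum_y (a == y)%:R * F y = F a.
Proof.
rewrite (bigD1 a) //= eqxx mul1r big1 ?addr0 // => y /negbTE.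
by rewrite eq_sym => ->; rewrite mul0r.
Qed.

(* Right multiplication by [inclmx D] extends a vector on [D] by zero to [V]. *)
Definition inclmx (D : {set V}) : 'M[R]_(#|D|, n) :=
  \matrix_(a, i) (@enum_val V (mem D) a == ev i)%:R.

Lemma restrmx_mulmx (D : {set V}) a i :
  (inclmx D *m A) a i = (e (@enum_val V (mem D) a) (ev i))%:R.
Proof.
rewrite mxE; under eq_bigr do rewrite !mxE.
by rewrite (sum_enum_val (fun y => (_ == y)%:R * (e y (ev i))%:R)) sum_pred1_mulr.
Qed.

Lemma restrmx_adj (D : {set V}) : inclmx D *m A *m (inclmx D)^T = adj_on R e D.
Proof.
apply/matrixP => a b; rewrite mxE [RHS]mxE; under eq_bigr do rewrite restrmx_mulmx !mxE.
rewrite (sum_enum_val (fun y => (e _ y)%:R * (_ == y)%:R)).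
by under eq_bigr do rewrite mulrC; rewrite sum_pred1_mulr.
Qed.

Lemma restrmx_orth (D : {set V}) : inclmx D *m (inclmx D)^T = 1%:M.
Proof.
apply/matrixP => a b; rewrite !mxE; under eq_bigr do rewrite !mxE.
rewrite (sum_enum_val (fun y => (_ == y)%:R * (_ == y)%:R)) sum_pred1_mulr.
by rewrite (inj_eq enum_val_inj) eq_sym.
Qed.

Lemma induced_eigen_extend (D : {set V}) mu : eigenvalue (adj_on R e D) mu ->
  exists f : V -> R, [/\ vec f != 0, forall x, x \notin D -> f x = 0 &
                         qform A (vec f) = mu * sqnorm (vec f)].
Proof.
move=> /eigenvalueP [x xA x_neq0].
pose f y := \sum_a x 0 a * (@enum_val V (mem D) a == y)%:R.
have xE : x *m inclmx D = vec f.
  by apply/rowP => i; rewrite !mxE; apply: eq_bigr => a _; rewrite mxE.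
have sqnorm_f : sqnorm (vec f) = sqnorm x.
  by rewrite -xE /sqnorm qform_mulmx mulmx1 restrmx_orth.
exists f; split.
- by rewrite -sqnorm_gt0 sqnorm_f sqnorm_gt0.
- move=> y yD; apply: big1 => a _.
  have [ay|_] := eqVneq (@enum_val V (mem D) a) y; last by rewrite mulr0.
  by move: (enum_valP a); rewrite ay (negbTE yD).
- by rewrite sqnorm_f -xE qform_mulmx restrmx_adj (qform_eigen xA).
Qed.

Lemma induced_eigenvalue_le (C : {set V}) lamS lamB mu :
  largest_eigenvalue SR lamS -> largest_abs_bulk e cell lamB ->
  eigenvalue (adj_on R e (~: C)) mu ->
  mu <= lamS * (1 - cmin R cell C) + lamB * cmin R cell C.
Proof.
move=> lamS_max lamB_max /induced_eigen_extend [f [x_neq0 f_C qx]].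
set x := vec f in x_neq0 qx *; set c := cmin R cell C.
have x_gt0 : 0 < sqnorm x by rewrite sqnorm_gt0.
have q_split := qform_projD x adjmx_sym Q_sym Q_idem AQ.
have n_split : sqnorm x = sqnorm (x *m Q) + sqnorm (x - x *m Q).
  by apply: qform_projD (trmx1 _ _) Q_sym Q_idem _; rewrite mul1mx mulmx1.
have le_w : qform A (x *m Q) <= lamS * sqnorm (x *m Q).
  by apply: qform_le_quotient; rewrite // -mulmxA Q_idem.
have le_u : qform A (x - x *m Q) <= lamB * (sqnorm x - sqnorm (x *m Q)).
  rewrite [sqnorm x - _](_ : _ = sqnorm (x - x *m Q)); last by rewrite n_split; ring.
  apply: qform_le_bulk => //.
  by rewrite mulmxBl -mulmxA (projmx_fix_cols cell_weight_gram) subrr.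
have le_avg : sqnorm (x *m Q) <= (1 - c) * sqnorm x.
  by apply: sqnorm_cellproj_le => y yC; apply: f_C; rewrite inE negbK.
have lamBS := abs_bulk_le_quotient lamS_max lamB_max.
have gap_ge0 : 0 <= (lamS - lamB) * ((1 - c) * sqnorm x - sqnorm (x *m Q)).
  by apply: mulr_ge0; rewrite subr_ge0.
rewrite -(ler_pM2r x_gt0) -qx; lra.
Qed.

End EquitablePartition.

Theorem mainTheorem6 (R : realType) (V : finType) (e : rel V) (k : nat)
    (cell : V -> 'I_k) (S : 'M[nat]_k) (C : {set V}) (lamS lamB : R) :
  simple_graph e -> connected_graph e -> S_regular e cell S ->
  (k < #|V|)%N ->
  C \proper [set: V] ->
  largest_eigenvalue (map_mx (fun m : nat => m%:R) S) lamS ->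
  largest_abs_bulk e cell lamB ->
  forall mu : R, eigenvalue (adj_on R e (~: C)) mu ->
    mu <= lamS * (1 - cmin R cell C) + lamB * cmin R cell C.
Proof.
move=> [_ e_sym] _ S_reg _ _ lamS_max lamB_max mu.
exact: (induced_eigenvalue_le e_sym S_reg lamS_max lamB_max).
Qed.
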